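(* Let $\varepsilon\ge0$ and $t\ge1$. For probability vectors $G=(g_1,\dots,g_t)$, $G'=(g'_1,\dots,g'_t)$ define $$\overline H^*(G,G')=\max_{S\subseteq[t]}\frac{\sum_{i\in[t]\setminus S}g_i+e^{\varepsilon}\sum_{j\in S}g_j}{\sum_{i\in[t]\setminus S}g'_i+e^{\varepsilon}\sum_{j\in S}g'_j}.$$ Then $\max_{G,G'}\ln\overline H^*(G,G')=\varepsilon$, where the maximum is over all pairs of probability vectors of length $t$, and this maximum is attained by any pair $G,G'$ such that for every $i\in[t]$, $g_i\neq0$ implies $g'_i=0$.
   Context: In the paper, $G$ and $G'$ are the conditional distributions $P(\hat X\mid X_k=x)$ and $P(\hat X\mid X_k=x')$ of an attribute $\hat X$ with $t$ values given two values of a correlated attribute $X_k$, and $\ln\max_{x,x'}\overline H^*(G,G')$ is the (upper bound on the) correlation-induced privacy leakage $L_{\hat X\to X_k}$ when $\hat X$ is perturbed by an $\varepsilon$-LDP mechanism. $[t]=\{1,\dots,t\}$. *)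

From HB Require Import structures.
From mathcomp Require Import all_boot all_order all_algebra.
From mathcomp Require Import all_classical all_reals all_analysis.
Set Implicit Arguments. Unset Strict Implicit. Unset Printing Implicit Defensive.
Import Order.TTheory GRing.Theory Num.Theory.
Local Open Scope ring_scope.

Definition prob_vec (R : realType) (t : nat) (g : 'I_t -> R) : Prop :=
  (forall i, 0 <= g i) /\ \sum_(i < t) g i = 1.

(* \overline{H}^*(G,G') = max over S ⊆ [t] of the ratio. The ratios are
   nonnegative, so folding Num.max from 0 computes the maximum over all
   (finitely many, nonempty family of) subsets S. *)
Definition Hbar (R : realType) (eps : R) (t : nat) (g g' : 'I_t -> R) : R :=
  \big[Num.max/0]_(S : {set 'I_t})
    ((\sum_(i in ~: S) g i + expR eps * \sum_(j in S) g j) /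
     (\sum_(i in ~: S) g' i + expR eps * \sum_(j in S) g' j)).

From HB Require Import structures.
From mathcomp Require Import all_boot all_order all_algebra.
From mathcomp Require Import all_classical all_reals all_analysis.
Set Implicit Arguments.
Unset Strict Implicit.
Unset Printing Implicit Defensive.
Import Order.TTheory GRing.Theory Num.Theory.
Local Open Scope ring_scope.

(* With [c = sum_{[t]\S} g] and [a = sum_S g] we have [c + a = 1], so for
   [E = e^eps >= 1] the quantity [c + E a] lies in [[1, E]].  Applied to the
   numerator and to the denominator, this bounds every ratio by [E / 1 = E].
   When [g'] vanishes on the support [S] of [g], the ratio at [S] is
   [(0 + E * 1) / (1 + E * 0) = E], so the bound is attained. *)

Definition skew_mass (R : numDomainType) (I : finType) (E : R) (g : I -> R)
    (S : {set I}) : R :=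
  \sum_(i in ~: S) g i + E * \sum_(j in S) g j.

Lemma HbarE (R : realType) (eps : R) (t : nat) (g g' : 'I_t -> R) :
  Hbar eps g g' =
  \big[Num.max/0]_(S : {set 'I_t})
    (skew_mass (expR eps) g S / skew_mass (expR eps) g' S).
Proof. by []. Qed.

Lemma big_setC_add (V : nmodType) (I : finType) (F : I -> V) (S : {set I}) :
  \sum_(i in ~: S) F i + \sum_(i in S) F i = \sum_i F i.
Proof.
rewrite addrC [RHS](bigID [in S]) /=; congr (_ + _).
by apply: eq_bigl => i; rewrite inE.
Qed.

Section SkewMass.
Variables (R : realFieldType) (I : finType) (E : R) (g : I -> R).
Hypotheses (E_ge1 : 1 <= E) (g_ge0 : forall i, 0 <= g i).

Lemma skew_mass_set0 : skew_mass E g finset.set0 = \sum_i g i.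
Proof.
rewrite /skew_mass big_set0 mulr0 addr0 finset.setC0.
by apply: eq_bigl => i; rewrite inE.
Qed.

Lemma sum_le_skew_mass S : \sum_i g i <= skew_mass E g S.
Proof.
rewrite -(big_setC_add _ S) lerD2l.
by apply: ler_peMl => //; exact: sumr_ge0.
Qed.

Lemma skew_mass_le_scale_sum S : skew_mass E g S <= E * \sum_i g i.
Proof.
rewrite -(big_setC_add _ S) mulrDr lerD2r.
by apply: ler_peMl => //; exact: sumr_ge0.
Qed.

End SkewMass.

Lemma skew_mass_ratio_le (R : realFieldType) (I : finType) (E : R)
    (g g' : I -> R) (S : {set I}) :
  1 <= E -> (forall i, 0 <= g i) -> (forall i, 0 <= g' i) ->
  \sum_i g i = 1 -> \sum_i g' i = 1 ->
  skew_mass E g S / skew_mass E g' S <= E.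
Proof.
move=> E_ge1 g_ge0 g'_ge0 g_sum g'_sum.
have den_ge1 : 1 <= skew_mass E g' S.
  by rewrite -g'_sum; exact: sum_le_skew_mass.
rewrite ler_pdivrMr; last exact: (lt_le_trans ltr01 den_ge1).
apply: (le_trans (skew_mass_le_scale_sum E_ge1 g_ge0 S)).
by rewrite g_sum mulr1 ler_pMr // (lt_le_trans ltr01 E_ge1).
Qed.

Lemma skew_mass_ratio_support (R : realFieldType) (I : finType) (E : R)
    (g g' : I -> R) :
  (forall i, g i != 0 -> g' i = 0) ->
  \sum_i g i = 1 -> \sum_i g' i = 1 ->
  skew_mass E g [set i | g i != 0] / skew_mass E g' [set i | g i != 0] = E.
Proof.
move=> disj g_sum g'_sum; set S := [set i | g i != 0].
have g_out : \sum_(i in ~: S) g i = 0.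
  by apply: big1 => i; rewrite !inE negbK => /eqP.
have g'_in : \sum_(i in S) g' i = 0 by apply: big1 => i; rewrite inE => /disj.
have g_in : \sum_(i in S) g i = 1.
  by rewrite -g_sum -(big_setC_add _ S) g_out add0r.
have g'_out : \sum_(i in ~: S) g' i = 1.
  by rewrite -g'_sum -(big_setC_add _ S) g'_in addr0.
by rewrite /skew_mass g_out g'_in g_in g'_out add0r mulr0 addr0 mulr1 divr1.
Qed.

Section Hbar.
Variables (R : realType) (eps : R) (t : nat) (g g' : 'I_t -> R).
Hypotheses (eps_ge0 : 0 <= eps) (pg : prob_vec g) (pg' : prob_vec g').

Let expR_ge1 : 1 <= expR eps. Proof. by rewrite -expR0 ler_expR. Qed.

Lemma Hbar_ge1 : 1 <= Hbar eps g g'.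
Proof.
rewrite HbarE; apply: le_trans (le_bigmax _ _ finset.set0).
by case: pg => _ g_sum; case: pg' => _ g'_sum;
  rewrite !skew_mass_set0 g_sum g'_sum divr1.
Qed.

Lemma Hbar_le_expR : Hbar eps g g' <= expR eps.
Proof.
rewrite HbarE; apply: bigmax_le => [|S _]; first exact: expR_ge0.
by case: pg => g_ge0 g_sum; case: pg' => g'_ge0 g'_sum;
  exact: skew_mass_ratio_le.
Qed.

Lemma Hbar_disjoint_support :
  (forall i, g i != 0 -> g' i = 0) -> Hbar eps g g' = expR eps.
Proof.
move=> disj; apply/le_anti; rewrite Hbar_le_expR /= HbarE.
case: pg pg' => _ g_sum [_ g'_sum].
by rewrite -{1}(skew_mass_ratio_support (expR eps) disj g_sum g'_sum) le_bigmax.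
Qed.

End Hbar.

Lemma prob_vec_dirac (R : realType) (t : nat) (j : 'I_t) :
  prob_vec (fun i : 'I_t => (i == j)%:R : R).
Proof.
split=> [i|]; first exact: ler0n.
by rewrite (bigD1 j) //= eqxx big1 ?addr0 // => i /negbTE ->.
Qed.

Theorem corollary2 (R : realType) (eps : R) (t : nat) :
  0 <= eps -> (0 < t)%N ->
  (* upper bound: ln Hbar <= eps for every pair of probability vectors *)
  (forall g g' : 'I_t -> R, prob_vec g -> prob_vec g' ->
      ln (Hbar eps g g') <= eps) /\
  (* attainment by every pair with g_i <> 0 -> g'_i = 0 *)
  (forall g g' : 'I_t -> R, prob_vec g -> prob_vec g' ->
      (forall i, g i != 0 -> g' i = 0) ->
      ln (Hbar eps g g') = eps) /\
  (* hence the maximum over all pairs is eps (such a pair exists when t >= 2) *)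
  ((1 < t)%N -> exists g g' : 'I_t -> R,
      [/\ prob_vec g, prob_vec g' & ln (Hbar eps g g') = eps]).
Proof.
move=> eps_ge0 t_gt0.
have bounded (g g' : 'I_t -> R) : prob_vec g -> prob_vec g' ->
    ln (Hbar eps g g') <= eps.
  move=> pg pg'; have Hbar_gt0 := lt_le_trans ltr01 (Hbar_ge1 eps pg pg').
  by rewrite -[leRHS]expRK ler_ln ?posrE ?expR_gt0 // Hbar_le_expR.
have attained (g g' : 'I_t -> R) : prob_vec g -> prob_vec g' ->
    (forall i, g i != 0 -> g' i = 0) -> ln (Hbar eps g g') = eps.
  by move=> pg pg' disj; rewrite Hbar_disjoint_support ?expRK.
split=> //; split=> // t_gt1.
pose i0 : 'I_t := Ordinal t_gt0; pose i1 : 'I_t := Ordinal t_gt1.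
exists (fun i => (i == i0)%:R), (fun i => (i == i1)%:R).
split; [exact: prob_vec_dirac | exact: prob_vec_dirac |].
apply: attained; [exact: prob_vec_dirac | exact: prob_vec_dirac |].
move=> i; have [-> _|_] := eqVneq i i0; last by rewrite eqxx.
by case: (eqVneq i0 i1) => // /(congr1 val).
Qed.
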